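(* For every abstraction $\lambda x.M \in \Lambda^\bullet$ and every $N \in \Lambda^\bullet$, we have $\operatorname{RB}((\lambda x.M)\ N) \to_\beta \operatorname{RB}(M[x:=N])$, i.e. the left-hand side reduces to the right-hand side in exactly one $\beta$-step.
   Context: $\Lambda$ is the set of untyped $\lambda$-terms (up to $\alpha$-equivalence), and $\to_\beta$ is one-step $\beta$-reduction on $\Lambda$. For each $M\in\Lambda$ there is a new formal symbol $\underline{M}$, called an atom. Atoms are constants: they have no free variables, and substitution leaves them unchanged. For $M\in\Lambda$, $M^\bullet$ is obtained from $M$ by replacing each free occurrence of each variable $x$ by the atom $\underline{x}$. Set $\Lambda^\bullet=\{M^\bullet : M\in\Lambda\}$; its elements are closed terms that may contain atoms. Substitution $P[x:=Q]$ is extended to such terms, with atoms treated as constants. For $\lambda x.M\in\Lambda^\bullet$ the body $M$ may contain $x$ free, and $M[x:=\underline{x}]\in\Lambda^\bullet$. The read-back map $\operatorname{RB}$ sends each element of $\Lambda^\bullet$ to a $\lambda$-term and is defined by: - $\operatorname{RB}(P\ Q)\equiv\operatorname{RB}(P)\ \operatorname{RB}(Q)$ for $P,Q\in\Lambda^\bullet$; - $\operatorname{RB}(\lambda x.P)\equiv\lambda x.\operatorname{RB}(P[x:=\underline{x}])$ for $\lambda x.P\in\Lambda^\bullet$; - $\operatorname{RB}(\underline{P})\equiv P$ for $P\in\Lambda$. *)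

From Stdlib Require Import Arith.

Inductive term : Type :=
| Var : nat -> term
| App : term -> term -> term
| Lam : term -> term.

Fixpoint lift (k c : nat) (t : term) : term :=
  match t with
  | Var i => if c <=? i then Var (i + k) else Var i
  | App t1 t2 => App (lift k c t1) (lift k c t2)
  | Lam t1 => Lam (lift k (S c) t1)
  end.

Fixpoint subst (j : nat) (u : term) (t : term) : term :=
  match t with
  | Var i => if i =? j then u else if j <? i then Var (pred i) else Var i
  | App t1 t2 => App (subst j u t1) (subst j u t2)
  | Lam t1 => Lam (subst (S j) (lift 1 0 u) t1)
  end.

Inductive beta : term -> term -> Prop :=
| beta_redex : forall t u, beta (App (Lam t) u) (subst 0 u t)
| beta_appL : forall t t' u, beta t t' -> beta (App t u) (App t' u)
| beta_appR : forall t u u', beta u u' -> beta (App t u) (App t u')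
| beta_lam : forall t t', beta t t' -> beta (Lam t) (Lam t').

(* An atom [Atom M] is a constant standing for the lambda-term M; its
   free variables are global names (top-level de Bruijn indices of M). *)
Inductive aterm : Type :=
| AVar : nat -> aterm
| AApp : aterm -> aterm -> aterm
| ALam : aterm -> aterm
| Atom : term -> aterm.

Fixpoint aclosed_at (d : nat) (t : aterm) : bool :=
  match t with
  | AVar i => i <? d
  | AApp t1 t2 => aclosed_at d t1 && aclosed_at d t2
  | ALam t1 => aclosed_at (S d) t1
  | Atom _ => true
  end.

Fixpoint alift (k c : nat) (t : aterm) : aterm :=
  match t with
  | AVar i => if c <=? i then AVar (i + k) else AVar i
  | AApp t1 t2 => AApp (alift k c t1) (alift k c t2)
  | ALam t1 => ALam (alift k (S c) t1)
  | Atom M => Atom M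
  end.

Fixpoint asubst (j : nat) (u : aterm) (t : aterm) : aterm :=
  match t with
  | AVar i => if i =? j then u else if j <? i then AVar (pred i) else AVar i
  | AApp t1 t2 => AApp (asubst j u t1) (asubst j u t2)
  | ALam t1 => ALam (asubst (S j) (alift 1 0 u) t1)
  | Atom M => Atom M
  end.

(** M^bullet : replace each free occurrence of a variable x by the atom
    [Atom (Var x)]. Under d binders, index i >= d denotes free variable i-d. *)
Fixpoint bullet_at (d : nat) (t : term) : aterm :=
  match t with
  | Var i => if d <=? i then Atom (Var (i - d)) else AVar i
  | App t1 t2 => AApp (bullet_at d t1) (bullet_at d t2)
  | Lam t1 => ALam (bullet_at (S d) t1)
  end.

Definition bullet (t : term) : aterm := bullet_at 0 t.

Definition in_Lbullet (P : aterm) : Prop := exists M : term, P = bullet M.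

(** In de Bruijn form, the clause
      RB(λx.P) = λx.RB(P[x := x_])
    (x chosen fresh, so that the binder captures exactly the atom x_
    introduced for it) amounts to keeping the binder and, for an atom
    occurring under d binders, lifting its free variables past them;
    RB(P Q) = RB(P) RB(Q) and RB(Atom M) = M. *)
Fixpoint RB_at (d : nat) (t : aterm) : term :=
  match t with
  | AVar i => Var i
  | AApp t1 t2 => App (RB_at d t1) (RB_at d t2)
  | ALam t1 => Lam (RB_at (S d) t1)
  | Atom M => lift d 0 M
  end.

Definition RB (t : aterm) : term := RB_at 0 t.

From Stdlib Require Import Arith Lia Bool.

(* Read-back commutes with substitution: RB(M[x:=N]) = RB(M)[x:=RB(N)].
   Hence RB((λx.M) N) = (λx.RB(M)) RB(N) contracts in one step to RB(M[x:=N]).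
   In de Bruijn form the only subtlety is the shifting: read back under d binders,
   a closed N is RB(N) lifted by d, and this is exactly the lifting the substitution
   performs when it enters d binders; an atom read back under d+1 binders is lifted
   past the substituted index, which the substitution then just lowers again. *)

Lemma bullet_at_closed (t : term) (d : nat) : aclosed_at d (bullet_at d t) = true.
Proof.
  revert d; induction t as [n | t1 IH1 t2 IH2 | t IH]; intros d; simpl.
  - destruct (Nat.leb_spec d n); simpl; [reflexivity | apply Nat.ltb_lt; lia].
  - now rewrite IH1, IH2.
  - apply IH.
Qed.

Lemma alift_closed (t : aterm) (k c : nat) : aclosed_at c t = true -> alift k c t = t.
Proof.
  revert c; induction t as [n | t1 IH1 t2 IH2 | t IH | M]; intros c Hc; simpl in *.
  - apply Nat.ltb_lt in Hc. destruct (Nat.leb_spec c n); [lia | reflexivity].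
  - apply andb_true_iff in Hc as [H1 H2]. now rewrite IH1, IH2.
  - now rewrite IH.
  - reflexivity.
Qed.

Lemma lift_lift (M : term) (k n c c' : nat) : c' <= c <= c' + n ->
  lift k c (lift n c' M) = lift (k + n) c' M.
Proof.
  revert c c'; induction M as [i | M1 IH1 M2 IH2 | M IH]; intros c c' Hc; simpl.
  - destruct (Nat.leb_spec c' i); simpl.
    + destruct (Nat.leb_spec c (i + n)); [f_equal; lia | lia].
    + destruct (Nat.leb_spec c i); [lia | reflexivity].
  - now rewrite IH1, IH2.
  - rewrite IH; [reflexivity | lia].
Qed.

Lemma subst_lift (M : term) (j n c : nat) (u : term) : c <= j <= c + n ->
  subst j u (lift (S n) c M) = lift n c M.
Proof.
  revert j c u; induction M as [i | M1 IH1 M2 IH2 | M IH]; intros j c u Hj; simpl.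
  - destruct (Nat.leb_spec c i); simpl.
    + destruct (Nat.eqb_spec (i + S n) j); [lia |].
      destruct (Nat.ltb_spec j (i + S n)); [f_equal; lia | lia].
    + destruct (Nat.eqb_spec i j); [lia |].
      destruct (Nat.ltb_spec j i); [lia | reflexivity].
  - now rewrite IH1, IH2.
  - rewrite IH; [reflexivity | lia].
Qed.

Lemma RB_at_lift (u : aterm) (d c : nat) : aclosed_at c u = true ->
  RB_at (d + c) u = lift d c (RB_at c u).
Proof.
  revert c; induction u as [i | u1 IH1 u2 IH2 | u IH | M]; intros c Hc; simpl in *.
  - apply Nat.ltb_lt in Hc. destruct (Nat.leb_spec c i); [lia | reflexivity].
  - apply andb_true_iff in Hc as [H1 H2]. now rewrite IH1, IH2.
  - rewrite <- IH by exact Hc. do 2 f_equal; lia.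
  - rewrite lift_lift; [reflexivity | lia].
Qed.

Lemma RB_at_S (u : aterm) (d : nat) : aclosed_at 0 u = true ->
  RB_at (S d) u = lift 1 0 (RB_at d u).
Proof.
  intros Hu.
  rewrite <- (Nat.add_0_r (S d)), <- (Nat.add_0_r d), !RB_at_lift by exact Hu.
  rewrite lift_lift, Nat.add_0_r; [reflexivity | lia].
Qed.

Lemma subst_RB_at (t u : aterm) (d : nat) : aclosed_at 0 u = true ->
  subst d (RB_at d u) (RB_at (S d) t) = RB_at d (asubst d u t).
Proof.
  intros Hu; revert d; induction t as [i | t1 IH1 t2 IH2 | t IH | M]; intros d; simpl.
  - destruct (Nat.eqb_spec i d); [reflexivity |].
    destruct (Nat.ltb_spec d i); reflexivity.
  - now rewrite IH1, IH2.
  - now rewrite <- RB_at_S, alift_closed, IH by exact Hu.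
  - apply subst_lift; lia.
Qed.

Theorem proposition1 :
  forall (M N : aterm),
    in_Lbullet (ALam M) -> in_Lbullet N ->
    beta (RB (AApp (ALam M) N)) (RB (asubst 0 N M)).
Proof.
  intros M N _ [N0 ->].
  unfold RB; simpl.
  rewrite <- subst_RB_at by apply bullet_at_closed.
  apply beta_redex.
Qed.
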